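(* Let $X$ be a real Hilbert space, $A,B\colon X\rightrightarrows X$ maximally monotone, $T:=\operatorname{Id}-J_A+J_BR_A$, $v:=P_{\overline{\operatorname{ran}}(\operatorname{Id}-T)}(0)$, $D:=\operatorname{dom}A-\operatorname{dom}B$, $R:=\operatorname{ran}A+\operatorname{ran}B$, $v_D:=P_{\overline D}(0)$, $v_R:=P_{\overline R}(0)$, and assume $\overline{\operatorname{ran}}(\operatorname{Id}-T)=\overline{D\cap R}=\overline D\cap\overline R$. Let $x\in X$. Then as $n\to\infty$: (i) $\|J_AT^nx-J_AT^{n+1}x\|^2+\|J_{A^{-1}}T^nx-J_{A^{-1}}T^{n+1}x\|^2\to\|v\|^2=\|v_D\|^2+\|v_R\|^2$; (ii) $J_AT^nx-J_AT^{n+1}x\to v_R$; (iii) $J_{A^{-1}}T^nx-J_{A^{-1}}T^{n+1}x\to v_D$.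
   Context: $J_C:=(\operatorname{Id}+C)^{-1}$, $R_C:=2J_C-\operatorname{Id}$ for maximally monotone $C$; $P_S$ is the projection onto a nonempty closed convex set $S$; convergence is in norm. *)

From HB Require Import structures.
From mathcomp Require Import all_boot all_order all_algebra.
From mathcomp Require Import all_classical all_reals all_analysis.
Set Implicit Arguments. Unset Strict Implicit. Unset Printing Implicit Defensive.
Import Order.TTheory GRing.Theory Num.Theory.
Import numFieldNormedType.Exports.
Local Open Scope classical_set_scope.
Local Open Scope ring_scope.

Section Hilbert.
Variables (R : realType) (X : completeNormedModType R).

(* ip is an inner product on X inducing its norm: X is then a real Hilbert space *)
Definition is_inner_product (ip : X -> X -> R) : Prop :=
  (forall x y, ip x y = ip y x) /\
  (forall (a : R) x y z, ip (a *: x + y) z = a * ip x z + ip y z) /\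
  (forall x, ip x x = `|x| ^+ 2).

(* set-valued operators X ⇉ X, given by their graph *)
Definition monotone (ip : X -> X -> R) (A : X -> set X) : Prop :=
  forall x y u w, A x u -> A y w -> 0 <= ip (x - y) (u - w).

Definition maximally_monotone (ip : X -> X -> R) (A : X -> set X) : Prop :=
  monotone ip A /\
  forall B : X -> set X, monotone ip B -> (forall x u, A x u -> B x u) ->
    forall x u, B x u -> A x u.

Definition op_inv (A : X -> set X) : X -> set X := fun u x => A x u.
Definition dom (A : X -> set X) : set X := [set x | exists u, A x u].
Definition ran (A : X -> set X) : set X := [set u | exists x, A x u].

(* J_C x = (Id + C)^{-1} x : the (unique, for C max. monotone) p with x - p ∈ C p *)
Definition resolvent (C : X -> set X) (x : X) : X := xget 0 [set p | C p (x - p)].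
Definition reflected (C : X -> set X) (x : X) : X := 2%:R *: resolvent C x - x.

Definition proj_set (S : set X) (z : X) : X :=
  xget 0 [set p | S p /\ forall q, S q -> `|z - p| <= `|z - q|].

Definition DR_T (A B : X -> set X) (x : X) : X :=
  x - resolvent A x + resolvent B (reflected A x).

Definition setdiffM (S1 S2 : set X) : set X := [set z | exists a b, S1 a /\ S2 b /\ z = a - b].
Definition setsumM (S1 S2 : set X) : set X := [set z | exists a b, S1 a /\ S2 b /\ z = a + b].

End Hilbert.

(* The Douglas-Rachford operator T is firmly nonexpansive, hence (Pazy,
   Baillon-Bruck-Reich) |T^n x - T^(n+1) x| tends to |v|, v being the element of
   minimal norm of the closure of ran (Id - T).  Each step T^n x - T^(n+1) x splits as
   a_n + b_n with a_n = J_A T^n x - J_A T^(n+1) x in ran A + ran B,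
   b_n = J_(A^-1) T^n x - J_(A^-1) T^(n+1) x in dom A - dom B and <a_n, b_n> >= 0.
   The variational inequalities of the projections v_R and v_D then give
     |v_R - a_n|^2 + |v_D - b_n|^2 <= |a_n + b_n|^2 - |v|^2,
   provided |v|^2 <= |v_D|^2 + |v_R|^2.  The latter holds because v_D + v_R lies in
   the closures of D and R and <v_D, v_R> <= 0: indeed -v_R is a recession direction
   of the closures of dom A and dom B, and v_D one of the closure of ran B.
   Resolvents exist by Minty's theorem, proved here by minimizing
   (Q, W, s) |-> |(Q - W)/2|^2 + s over the convex hull of the graph lifted by the
   coupling <q, w>: as for the minimal-norm point of a closed convex set, the
   parallelogram law makes minimizing sequences Cauchy. *)

From mathcomp Require Import all_boot all_order all_algebra.
From mathcomp Require Import all_classical all_reals all_analysis.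
From mathcomp Require Import ring lra.
Import Order.TTheory GRing.Theory Num.Theory.
Import numFieldNormedType.Exports.
Local Open Scope classical_set_scope.
Local Open Scope ring_scope.

Set Implicit Arguments.
Unset Strict Implicit.

Section InnerProduct.
Context {R : realType} {X : completeNormedModType R} {ip : X -> X -> R}.
Hypothesis ip_inner : is_inner_product ip.

Lemma ipC x y : ip x y = ip y x.
Proof. by case: ip_inner. Qed.

Lemma ipxx x : ip x x = `|x| ^+ 2.
Proof. by case: ip_inner => _ []. Qed.

Lemma ipZDl a x y z : ip (a *: x + y) z = a * ip x z + ip y z.
Proof. by case: ip_inner => _ [-> _]. Qed.

Lemma ip0l z : ip 0 z = 0.
Proof. by have := ipZDl 1 0 0 z; rewrite scaler0 addr0 mul1r; lra. Qed.

Lemma ipDl x y z : ip (x + y) z = ip x z + ip y z.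
Proof. by rewrite -[x in LHS]scale1r ipZDl mul1r. Qed.

Lemma ipZl a x z : ip (a *: x) z = a * ip x z.
Proof. by rewrite -[a *: x]addr0 ipZDl ip0l addr0. Qed.

Lemma ipNl x z : ip (- x) z = - ip x z.
Proof. by rewrite -scaleN1r ipZl mulN1r. Qed.

Lemma ipBl x y z : ip (x - y) z = ip x z - ip y z.
Proof. by rewrite ipDl ipNl. Qed.

Lemma ip0r z : ip z 0 = 0.
Proof. by rewrite ipC ip0l. Qed.

Lemma ipDr x y z : ip z (x + y) = ip z x + ip z y.
Proof. by rewrite ipC ipDl !(ipC z). Qed.

Lemma ipZr a x z : ip z (a *: x) = a * ip z x.
Proof. by rewrite ipC ipZl ipC. Qed.

Lemma ipNr x z : ip z (- x) = - ip z x.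
Proof. by rewrite ipC ipNl ipC. Qed.

Lemma ipBr x y z : ip z (x - y) = ip z x - ip z y.
Proof. by rewrite ipDr ipNr. Qed.

Definition ipE := (ipDl, ipDr, ipBl, ipBr, ipNl, ipNr, ipZl, ipZr, ip0l, ip0r).

End InnerProduct.

(* Expand inner products bilinearly and orient each [ip b a] as [ip a b], so that
   [ring] and [lra] see every pair of vectors as a single atom. *)
Ltac ip_symmetrize ip_inner := repeat match goal with
  | |- context [?ip ?a ?b] => tryif constr_eq a b then fail else
      match goal with |- context [ip b a] => rewrite (ipC ip_inner b a) end
  end.

Ltac ip_expand ip_inner := rewrite -?(ipxx ip_inner) ?(ipE ip_inner); ip_symmetrize ip_inner.

Section InnerProductFacts.
Context {R : realType} {X : completeNormedModType R} {ip : X -> X -> R}.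
Hypothesis ip_inner : is_inner_product ip.

Lemma normD_sqr x y : `|x + y| ^+ 2 = `|x| ^+ 2 + 2 * ip x y + `|y| ^+ 2.
Proof. by ip_expand ip_inner; ring. Qed.

Lemma ip_le_sqr x y : 2 * ip x y <= `|x| ^+ 2 + `|y| ^+ 2.
Proof. by have := sqr_ge0 `|x - y|; ip_expand ip_inner; lra. Qed.

Lemma norm_comb_sqr (t : R) (x y : X) :
  `|(1 - t) *: x + t *: y| ^+ 2 =
    (1 - t) * `|x| ^+ 2 + t * `|y| ^+ 2 - t * (1 - t) * `|x - y| ^+ 2.
Proof. by ip_expand ip_inner; ring. Qed.

Lemma ip_subr_eq0 (x y : X) : ip (x - y) (x - y) = 0 -> x = y.
Proof. by rewrite ipxx // => /eqP; rewrite sqrf_eq0 normr_eq0 subr_eq0 => /eqP. Qed.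

End InnerProductFacts.

(* A vector identity [x = y] follows from [ip (x - y) (x - y) = 0], which [ring]
   checks once inner products are expanded. *)
Ltac vector_ring ip_inner := apply: (ip_subr_eq0 ip_inner); ip_expand ip_inner; ring.

Section ClosureInNormedSpace.
Context {R : realType} {X : completeNormedModType R}.

Lemma closureP_norm (S : set X) z :
  closure S z <-> forall e : R, 0 < e -> exists2 s, S s & `|z - s| < e.
Proof.
split=> [Sz e e0|Sz B /nbhs_ballP [e /= e0 zeB]].
  have [s [Ss]] := Sz _ (nbhsx_ballx z e e0).
  by rewrite -ball_normE /ball_ => zes; exists s.
have [s Ss zes] := Sz e e0.
by exists s; split=> //; apply: zeB; rewrite -ball_normE.
Qed.

Lemma normD_lt_split (a b : X) (e : R) :
  `|a| < e / 2 -> `|b| < e / 2 -> `|a + b| < e.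
Proof. by move=> ae be; apply: le_lt_trans (ler_normD _ _) _; rewrite [e]splitr ltrD. Qed.

Lemma closure_addr (S : set X) w :
  (forall s, S s -> closure S (s + w)) -> forall z, closure S z -> closure S (z + w).
Proof.
move=> Sw z /closureP_norm Sz; apply/closureP_norm => e e0.
have e2 : 0 < e / 2 by rewrite divr_gt0.
have [s Ss zs] := Sz _ e2.
have [s' Ss' ss'] := (closureP_norm S _).1 (Sw s Ss) _ e2.
by exists s' => //; rewrite -[z + w](subrKA s) -addrA normD_lt_split.
Qed.

Lemma closure_setdiffM (S1 S2 : set X) x y :
  closure S1 x -> closure S2 y -> closure (setdiffM S1 S2) (x - y).
Proof.
move=> /closureP_norm S1x /closureP_norm S2y; apply/closureP_norm => e e0.
have e2 : 0 < e / 2 by rewrite divr_gt0.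
have [a S1a xa] := S1x _ e2; have [b S2b yb] := S2y _ e2.
exists (a - b); first by exists a, b.
have -> : x - y - (a - b) = (x - a) + (b - y).
  by rewrite opprB addrACA [RHS]addrACA (addrC (- a)).
by rewrite normD_lt_split // distrC.
Qed.

Lemma closure_setsumM (S1 S2 : set X) x y :
  closure S1 x -> closure S2 y -> closure (setsumM S1 S2) (x + y).
Proof.
move=> /closureP_norm S1x /closureP_norm S2y; apply/closureP_norm => e e0.
have e2 : 0 < e / 2 by rewrite divr_gt0.
have [a S1a xa] := S1x _ e2; have [b S2b yb] := S2y _ e2.
exists (a + b); first by exists a, b.
by rewrite opprD addrACA normD_lt_split.
Qed.

Definition is_convex (S : set X) :=
  forall x y (t : R), S x -> S y -> 0 <= t <= 1 -> S ((1 - t) *: x + t *: y).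

Definition convex_in_closure (S : set X) := forall x y (t : R), S x -> S y ->
  0 <= t <= 1 -> closure S ((1 - t) *: x + t *: y).

Lemma convex_closure (S : set X) : convex_in_closure S -> is_convex (closure S).
Proof.
move=> Sconv x y t /closureP_norm Sx /closureP_norm Sy t01.
have /andP [t0 t1] := t01; have t'0 : 0 <= 1 - t by rewrite subr_ge0.
apply/closureP_norm => e e0.
have e2 : 0 < e / 2 by rewrite divr_gt0.
have [x1 Sx1 xx1] := Sx _ e2; have [y1 Sy1 yy1] := Sy _ e2.
have [s Ss s_near] := (closureP_norm S _).1 (Sconv _ _ _ Sx1 Sy1 t01) _ e2.
exists s => //; rewrite -[_ - s](subrKA ((1 - t) *: x1 + t *: y1)).
apply: le_lt_trans (ler_normD _ _) _; rewrite [e]splitr ler_ltD //.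
rewrite opprD addrACA -!scalerBr; apply: le_trans (ler_normD _ _) _.
rewrite !normrZ !ger0_norm //.
have := ler_wpM2l t'0 (ltW xx1); have := ler_wpM2l t0 (ltW yy1); lra.
Qed.

Lemma convex_in_closure_setdiffM (S1 S2 : set X) :
  convex_in_closure S1 -> convex_in_closure S2 -> convex_in_closure (setdiffM S1 S2).
Proof.
move=> S1_conv S2_conv _ _ t [a1 [b1 [S1a1 [S2b1 ->]]]] [a2 [b2 [S1a2 [S2b2 ->]]]] t01.
rewrite !scalerBr addrACA -opprD.
by apply: closure_setdiffM; [exact: S1_conv | exact: S2_conv].
Qed.

Lemma convex_in_closure_setsumM (S1 S2 : set X) :
  convex_in_closure S1 -> convex_in_closure S2 -> convex_in_closure (setsumM S1 S2).
Proof.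
move=> S1_conv S2_conv _ _ t [a1 [b1 [S1a1 [S2b1 ->]]]] [a2 [b2 [S1a2 [S2b2 ->]]]] t01.
rewrite !scalerDr addrACA.
by apply: closure_setsumM; [exact: S1_conv | exact: S2_conv].
Qed.

End ClosureInNormedSpace.

Section Sequences.
Context {R : realType} {X : completeNormedModType R}.

Lemma sqr_norm_cvg0 (u : nat -> X) :
  (fun n => `|u n| ^+ 2) @ \oo --> 0 -> u @ \oo --> 0.
Proof.
move=> u2; apply/norm_cvg0P.
have -> : (fun n => `|u n|) = Num.sqrt \o (fun n => `|u n| ^+ 2).
  by apply/funext => n /=; rewrite sqrtr_sqr normr_id.
by rewrite -sqrtr0; apply: continuous_cvg => //; exact: sqrt_continuous.
Qed.

Lemma cvg_sqr_dist0 (u : nat -> X) (l : X) :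
  (fun n => `|l - u n| ^+ 2) @ \oo --> 0 -> u @ \oo --> l.
Proof.
move=> /sqr_norm_cvg0 /cvgr0Pnorm_lt lu0; apply/cvgrPdist_lt => e e0.
exact: lu0.
Qed.

Lemma cvg_norm_sqr (u : nat -> X) (l : X) :
  u @ \oo --> l -> (fun n => `|u n| ^+ 2) @ \oo --> `|l| ^+ 2.
Proof. by move=> ul; apply: cvgM; exact: cvg_norm. Qed.

Lemma harmonic_near_lt (e : R) : 0 < e -> \forall n \near \oo, n.+1%:R^-1 < e.
Proof.
move=> e0; have /cvgr0Pnorm_lt /(_ e e0) := @cvg_harmonic R.
by apply: filterS => n; rewrite /= ger0_norm.
Qed.

Lemma minimizing_seq_cvg {M : Type} (H : set M) (phi : M -> R) (c : M -> X) (B : R) :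
  H !=set0 -> (forall m, H m -> B <= phi m) ->
  (forall m1 m2, H m1 -> H m2 -> exists2 m, H m &
     phi m + `|c m1 - c m2| ^+ 2 / 4 <= (phi m1 + phi m2) / 2) ->
  exists s (f : nat -> M) (p : X), [/\ forall m, H m -> s <= phi m, forall n, H (f n),
    phi \o f @ \oo --> s & c \o f @ \oo --> p].
Proof.
move=> [m0 Hm0] phiB phi_mid.
have phi_inf : has_inf (phi @` H).
  by split; [exists (phi m0), m0 | exists B => _ [m Hm <-]; exact: phiB].
set s := inf (phi @` H).
have phi_s m : H m -> s <= phi m by move=> Hm; apply: ge_inf phi_inf.2 _ _; exists m.
have /choice [f Hf] : forall n : nat, exists m, H m /\ phi m < s + n.+1%:R^-1.
  move=> n; have n_gt0 : 0 < n.+1%:R^-1 :> R by rewrite invr_gt0.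
  by have [_ [m Hm <-]] := inf_adherent n_gt0 phi_inf; exists m.
have dist_f n k : `|c (f n) - c (f k)| ^+ 2 < 2 * (n.+1%:R^-1 + k.+1%:R^-1).
  have [m Hm mid] := phi_mid _ _ (Hf n).1 (Hf k).1.
  have := phi_s _ Hm; move: mid (Hf n).2 (Hf k).2.
  move: n.+1%:R^-1 k.+1%:R^-1 => a b; lra.
have cf_cvg : cvgn (c \o f).
  apply: cauchy_cvg; apply: cauchy_exP => e e0.
  have e2 : 0 < e ^+ 2 / 4 by rewrite divr_gt0 ?exprn_gt0.
  have [N _ N_small] := harmonic_near_lt e2.
  exists (c (f N)), N => // n /= Nn; rewrite -ball_normE /=.
  rewrite -(@ltr_pXn2r _ 2) ?nnegrE ?(ltW e0) //.
  move: (dist_f N n) (N_small N (leqnn N)) (N_small n Nn).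
  move: N.+1%:R^-1 n.+1%:R^-1 => a b; lra.
exists s, f, (lim (c \o f @ \oo)); split=> // [m|]; first exact: (Hf m).1.
apply: (@squeeze_cvgr _ _ _ _ (cst s) (fun n => s + n.+1%:R^-1)).
- apply: nearW => n /=; apply/andP; split; first exact/phi_s/(Hf n).1.
  exact/ltW/(Hf n).2.
- exact: cvg_cst.
- have cvg_ub := cvgD (cvg_cst s) (@cvg_harmonic R).
  by rewrite addr0 in cvg_ub; exact: cvg_ub.
Qed.

End Sequences.

Lemma ler0_small_mul {R : realType} (x y : R) :
  (forall t, 0 < t <= 1 -> x <= t * y) -> x <= 0.
Proof.
move=> xy; rewrite leNgt; apply/negP => x0.
have [y0|y0] := lerP y 0.
  by have := xy 1; rewrite ltr01 lexx mul1r; move/(_ isT); lra.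
have xy0 : 0 < x + y by lra.
have := xy (x / (x + y)); rewrite divr_gt0 // ler_pdivrMr // mul1r.
have -> : x <= x + y by lra.
by rewrite mulrAC ler_pdivlMr //; move/(_ isT); nra.
Qed.

Section MinimalNorm.
Context {R : realType} {X : completeNormedModType R} {ip : X -> X -> R}.
Hypothesis ip_inner : is_inner_product ip.

Lemma exists_min_norm (S : set X) : closed S -> is_convex S -> S !=set0 ->
  exists2 p, S p & forall q, S q -> `|p| <= `|q|.
Proof.
move=> S_closed S_convex S_n0.
have [q _ /=|m1 m2 Sm1 Sm2|s [f [p [s_lb Sf f_s f_p]]]] :=
  minimizing_seq_cvg (phi := fun q => `|q| ^+ 2) (c := id) (B := 0) S_n0.
- exact: sqr_ge0.
- exists ((1 - 2^-1) *: m1 + 2^-1 *: m2).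
    by apply: S_convex; rewrite // invr_ge0 ler0n invf_le1 ?ler1n.
  by ip_expand ip_inner; lra.
exists p; first by apply: (closed_cvg _ S_closed _ _ f_p); exact: nearW.
have p_s : `|p| ^+ 2 = s.
  apply: (@cvg_unique _ _ ((fun n => `|f n| ^+ 2) @ \oo)) => //.
  exact: cvg_norm_sqr f_p.
by move=> q /s_lb; rewrite -p_s ler_sqr ?nnegrE.
Qed.

Lemma min_norm_variational (S : set X) p : is_convex S -> S p ->
  (forall q, S q -> `|p| <= `|q|) -> forall q, S q -> `|p| ^+ 2 <= ip p q.
Proof.
move=> S_convex Sp p_min q Sq.
suff : `|p| ^+ 2 - ip p q <= 0 by lra.
apply: (@ler0_small_mul _ _ (`|p - q| ^+ 2 / 2)) => t /andP [t0 t1].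
have := p_min _ (S_convex _ _ t Sp Sq ltac:(by rewrite ltW)).
rewrite -ler_sqr ?nnegrE //; ip_expand ip_inner => ineq.
have : 0 <= t * (2 * (ip p q - ip p p) + t * (ip p p - 2 * ip p q + ip q q)) by nra.
by rewrite pmulr_rge0 //; lra.
Qed.

Lemma proj_set_spec (S : set X) : closed S -> is_convex S -> S !=set0 ->
  S (proj_set S 0) /\ forall q, S q -> `|proj_set S 0| <= `|q|.
Proof.
move=> S_closed S_convex S_n0; have [p Sp p_min] := exists_min_norm S_closed S_convex S_n0.
rewrite /proj_set; case: xgetP => /= [q _ [Sq q_min]|no_min].
  by split=> // r Sr; have := q_min r Sr; rewrite !sub0r !normrN.
by exfalso; apply: (no_min p); split=> // r Sr; rewrite !sub0r !normrN; exact: p_min.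
Qed.

Lemma proj_set_variational (S : set X) : closed S -> is_convex S -> S !=set0 ->
  forall q, S q -> `|proj_set S 0| ^+ 2 <= ip (proj_set S 0) q.
Proof.
move=> S_closed S_convex S_n0; have [Sp p_min] := proj_set_spec S_closed S_convex S_n0.
exact: min_norm_variational.
Qed.

End MinimalNorm.

Section MonotoneAntidiagonal.
Context {R : realType} {X : completeNormedModType R} {ip : X -> X -> R}.
Hypothesis ip_inner : is_inner_product ip.
Variable G : X -> X -> Prop.
Hypothesis G_mono : forall q w q' w', G q w -> G q' w' -> 0 <= ip (q - q') (w - w').

Inductive coupled_hull : X -> X -> R -> Prop :=
| hull_graph q w : G q w -> coupled_hull q w (ip q w)
| hull_comb (t : R) Q1 W1 s1 Q2 W2 s2 : 0 <= t <= 1 ->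
    coupled_hull Q1 W1 s1 -> coupled_hull Q2 W2 s2 ->
    coupled_hull ((1 - t) *: Q1 + t *: Q2) ((1 - t) *: W1 + t *: W2)
      ((1 - t) * s1 + t * s2).

Lemma coupled_hull_cross_graph q w Q W s : G q w -> coupled_hull Q W s ->
  0 <= ip q w + s - ip q W - ip Q w.
Proof.
move=> Gqw; elim=> [q' w' /(G_mono Gqw)|t Q1 W1 s1 Q2 W2 s2 /andP [t0 t1] _ h1 _ h2].
  by ip_expand ip_inner; lra.
by ip_expand ip_inner; nra.
Qed.

Lemma coupled_hull_cross Q1 W1 s1 Q2 W2 s2 :
  coupled_hull Q1 W1 s1 -> coupled_hull Q2 W2 s2 -> 0 <= s1 + s2 - ip Q1 W2 - ip Q2 W1.
Proof.
move=> h1 h2; elim: h1 => [q w Gqw|t Q W s Q' W' s' /andP [t0 t1] _ h1 _ h1'].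
  exact: coupled_hull_cross_graph.
by ip_expand ip_inner; nra.
Qed.

(* Minty's argument: along a minimizing sequence of [phi] on the lifted hull, the
   points [(Q - W)/2] converge to some [p], and [(p, -p)] is then monotonically
   related to every point of the graph of G. *)
Lemma monotone_antidiagonal : (exists q w, G q w) ->
  exists p, forall q w, G q w -> ip (p - q) (p + w) <= 0.
Proof.
move=> [q0 [w0 G0]].
pose H (m : X * X * R) := coupled_hull m.1.1 m.1.2 m.2.
pose c (m : X * X * R) := 2^-1 *: (m.1.1 - m.1.2).
pose phi m := `|c m| ^+ 2 + m.2.
have phi_ge0 m : H m -> 0 <= phi m.
  case: m => [[Q W] s] /= HQWs; have := coupled_hull_cross HQWs HQWs.
  by have := sqr_ge0 `|Q + W|; rewrite /phi /c /=; ip_expand ip_inner; lra.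
have [[[Q1 W1] s1] [[Q2 W2] s2] /= h1 h2|s [f [p [s_lb Hf f_s f_p]]]] :=
  minimizing_seq_cvg (c := c) (ex_intro H (q0, w0, ip q0 w0) (hull_graph G0)) phi_ge0.
  exists ((1 - 2^-1) *: Q1 + 2^-1 *: Q2, (1 - 2^-1) *: W1 + 2^-1 *: W2,
    (1 - 2^-1) * s1 + 2^-1 * s2).
    by apply: hull_comb; rewrite // invr_ge0 ler0n invf_le1 ?ler1n.
  by rewrite /phi /c /=; ip_expand ip_inner; lra.
have s_ge0 : 0 <= s.
  by apply: (closed_cvg _ (@closed_ge _ 0) _ _ f_s); apply: nearW => n; exact: phi_ge0.
exists p => q w Gqw; pose cg := 2^-1 *: (q - w).
have comb_le t : 0 < t <= 1 -> (1 - t) * `|p - cg| ^+ 2 <= `|2^-1 *: (q + w)| ^+ 2.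
  move=> /andP [t0 t1]; have t01 : 0 <= t <= 1 by rewrite ltW.
  pose L n := (1 - t) * phi (f n) + t * `|2^-1 *: (q + w)| ^+ 2
              - t * (1 - t) * `|c (f n) - cg| ^+ 2.
  have s_L n : s <= L n.
    rewrite /L; move: (Hf n); case: (f n) => [[Q W] σ] /= HQ.
    have := s_lb (_, _, _) (hull_comb t01 HQ (hull_graph Gqw)); rewrite /phi /c /=.
    have -> : 2^-1 *: ((1 - t) *: Q + t *: q - ((1 - t) *: W + t *: w)) =
              (1 - t) *: (2^-1 *: (Q - W)) + t *: cg.
      by rewrite opprD addrACA -!scalerBr scalerDr !scalerA !(mulrC 2^-1).
    rewrite (norm_comb_sqr ip_inner); ip_expand ip_inner; lra.
  have L_lim : L @ \oo --> (1 - t) * s + t * `|2^-1 *: (q + w)| ^+ 2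
                          - t * (1 - t) * `|p - cg| ^+ 2.
    apply: cvgB; first by apply: cvgD; [apply: cvgMr|exact: cvg_cst].
    by apply: cvgMr; apply: cvg_norm_sqr; apply: cvgB => //; exact: cvg_cst.
  have s_le : s <= (1 - t) * s + t * `|2^-1 *: (q + w)| ^+ 2 - t * (1 - t) * `|p - cg| ^+ 2.
    by apply: (closed_cvg _ (@closed_ge _ s) _ _ L_lim); exact: nearW.
  rewrite -(ler_pM2l t0); have := mulr_ge0 (ltW t0) s_ge0; lra.
have : `|p - cg| ^+ 2 - `|2^-1 *: (q + w)| ^+ 2 <= 0.
  by apply: (@ler0_small_mul _ _ (`|p - cg| ^+ 2)) => t /comb_le; lra.
by rewrite /cg; ip_expand ip_inner; lra.
Qed.

End MonotoneAntidiagonal.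

Section MaximallyMonotone.
Context {R : realType} {X : completeNormedModType R} {ip : X -> X -> R}.
Hypothesis ip_inner : is_inner_product ip.
Implicit Types A : X -> set X.

Lemma maximally_monotone_related A p v : maximally_monotone ip A ->
  (forall x u, A x u -> 0 <= ip (x - p) (u - v)) -> A p v.
Proof.
move=> [A_mono A_max] pv_rel.
apply: (A_max (fun x u => A x u \/ x = p /\ u = v)) => [x y u w| x u Axu|]; [|by left|by right].
case=> [Axu|[-> ->]] [Ayw|[-> ->]]; first exact: A_mono.
- exact: pv_rel.
- by rewrite -(opprB y) (ipNl ip_inner) -(opprB w) (ipNr ip_inner) opprK; exact: pv_rel.
- by rewrite subrr (ip0l ip_inner).
Qed.

Lemma maximally_monotone_graph_n0 A : maximally_monotone ip A -> exists x u, A x u.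
Proof.
move=> A_mm; have [//|A0] := pselect (exists x u, A x u); exists 0, 0.
by apply: maximally_monotone_related A_mm _ => x u Axu; exfalso; apply: A0; exists x, u.
Qed.

Lemma exists_scaled_resolvent A (lam : R) z : maximally_monotone ip A -> 0 < lam ->
  exists p, A p (lam^-1 *: (z - p)).
Proof.
move=> A_mm lam0; pose G q w := exists2 u, A q u & w = lam *: u - z.
have G_mono q w q' w' : G q w -> G q' w' -> 0 <= ip (q - q') (w - w').
  move=> [u Aqu ->] [u' Aqu' ->]; rewrite opprB addrA subrK -scalerBr (ipZr ip_inner).
  by rewrite mulr_ge0 ?(ltW lam0) //; exact: (A_mm.1 _ _ _ _ Aqu Aqu').
have [q0 [u0 Aq0]] := maximally_monotone_graph_n0 A_mm.
have [|p p_anti] := monotone_antidiagonal ip_inner G_mono.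
  by exists q0, (lam *: u0 - z), u0.
exists p; apply: maximally_monotone_related A_mm _ => x u Axu.
have := p_anti x (lam *: u - z) (ex_intro2 _ _ u Axu erefl).
have -> : u - lam^-1 *: (z - p) = lam^-1 *: (p + (lam *: u - z)).
  by rewrite scalerBr scalerDr scalerBr scalerA mulVf ?gt_eqF // scale1r opprB addrCA.
by rewrite -[x - p]opprB (ipNl ip_inner) (ipZr ip_inner) oppr_ge0 pmulr_rle0 // invr_gt0.
Qed.

Lemma resolventP A x : maximally_monotone ip A -> A (resolvent A x) (x - resolvent A x).
Proof.
move=> A_mm; rewrite /resolvent; case: xgetP => //= no_p.
have [p] := exists_scaled_resolvent x A_mm ltr01.
by rewrite invr1 scale1r => Ap; have := no_p p.
Qed.

Lemma resolvent_eq A x p : maximally_monotone ip A -> A p (x - p) -> resolvent A x = p.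
Proof.
move=> A_mm Ap; apply/eqP; rewrite -subr_eq0 -normr_eq0 -sqrf_eq0 eq_le sqr_ge0 andbT.
have := A_mm.1 _ _ _ _ (resolventP x A_mm) Ap.
rewrite (_ : x - _ - _ = - (resolvent A x - p)); last by rewrite opprB addrC subrKA opprB.
by rewrite (ipNr ip_inner) (ipxx ip_inner) oppr_ge0.
Qed.

Lemma maximally_monotone_inv A : maximally_monotone ip A -> maximally_monotone ip (op_inv A).
Proof.
move=> [A_mono A_max]; split=> [x y u w Aux Awy|B B_mono AB x u Bxu].
  by rewrite (ipC ip_inner); exact: A_mono.
apply: (A_max (op_inv B)) => // [x' y' u' w' Bu'x' Bw'y'|x' u' Ax'u'].
  by rewrite (ipC ip_inner); exact: B_mono.
exact: AB.
Qed.

Lemma resolvent_inv A x : maximally_monotone ip A ->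
  resolvent (op_inv A) x = x - resolvent A x.
Proof.
move=> A_mm; apply: resolvent_eq (maximally_monotone_inv A_mm) _.
by rewrite /op_inv subKr; exact: resolventP.
Qed.

End MaximallyMonotone.

Section DomainGeometry.
Context {R : realType} {X : completeNormedModType R} {ip : X -> X -> R}.
Hypothesis ip_inner : is_inner_product ip.
Implicit Types A : X -> set X.

Lemma scaled_resolvent_mono A (lam : R) z p x u : maximally_monotone ip A -> 0 < lam ->
  A p (lam^-1 *: (z - p)) -> A x u -> lam * ip (p - x) u <= ip (p - x) (z - p).
Proof.
move=> A_mm lam0 Ap Axu; have := A_mm.1 _ _ _ _ Ap Axu.
by rewrite [ip _ (_ - u)](ipBr ip_inner) (ipZr ip_inner) subr_ge0 ler_pdivlMl.
Qed.

(* [p] below is the resolvent of [lam A] at [z]; the bound forces [p -> z] as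
   [lam -> 0]. *)
Lemma closure_dom_resolvent_bound A z (K : R) (U : X) : maximally_monotone ip A ->
  (forall (lam : R) p, 0 < lam <= 1 -> A p (lam^-1 *: (z - p)) ->
     `|z - p| ^+ 2 <= lam * (K + ip (z - p) U)) ->
  closure (dom A) z.
Proof.
move=> A_mm bound; apply/closureP_norm => e e0.
pose C := 2 * `|K| + `|U| ^+ 2.
have C0 : 0 <= C by rewrite addr_ge0 ?mulr_ge0 ?sqr_ge0.
pose lam := Num.min 1 (e ^+ 2 / (C + 1)).
have lam0 : 0 < lam by rewrite lt_min ltr01 divr_gt0 ?exprn_gt0 //; lra.
have lam1 : lam <= 1 by rewrite ge_min lexx.
have lamC : lam * C < e ^+ 2.
  have : lam <= e ^+ 2 / (C + 1) by rewrite ge_min lexx orbT.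
  rewrite ler_pdivlMr; last by lra.
  by have := exprn_gt0 2 e0; nra.
have [p Ap] := exists_scaled_resolvent ip_inner z A_mm lam0.
exists p; first by exists (lam^-1 *: (z - p)).
have zp := bound _ _ (introT andP (conj lam0 lam1)) Ap.
have := ip_le_sqr ip_inner (z - p) (lam *: U).
rewrite (ipZr ip_inner) normrZ (ger0_norm (ltW lam0)) exprMn => zpU.
have lamK := ler_wpM2l (ltW lam0) (ler_norm K).
have lamU : lam ^+ 2 * `|U| ^+ 2 <= lam * `|U| ^+ 2.
  by rewrite expr2 -mulrA ler_pM2l // ler_piMl ?sqr_ge0.
rewrite -(@ltr_pXn2r _ 2) ?nnegrE ?(ltW e0) // -/lam; move: lamC; rewrite /C; lra.
Qed.

Lemma dom_convex_in_closure A : maximally_monotone ip A -> convex_in_closure (dom A).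
Proof.
move=> A_mm x1 x2 t [u1 Ax1] [u2 Ax2] /andP [t0 t1].
set z := (1 - t) *: x1 + t *: x2.
apply: (@closure_dom_resolvent_bound _ _ ((1 - t) * ip (x1 - z) u1 + t * ip (x2 - z) u2)
  ((1 - t) *: u1 + t *: u2) A_mm) => lam p /andP [lam0 _] Ap.
have := ler_wpM2l (ltac:(lra) : 0 <= 1 - t) (scaled_resolvent_mono A_mm lam0 Ap Ax1).
have := ler_wpM2l t0 (scaled_resolvent_mono A_mm lam0 Ap Ax2).
by rewrite /z; ip_expand ip_inner; lra.
Qed.

Lemma closure_dom_recession A w (K : R) x0 u0 : maximally_monotone ip A ->
  (forall x u, A x u -> ip w u <= K) -> A x0 u0 -> closure (dom A) (x0 + w).
Proof.
move=> A_mm wK Ax0.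
apply: (@closure_dom_resolvent_bound _ _ (K - ip w u0) u0 A_mm) => lam p /andP [lam0 _] Ap.
have := wK _ _ Ap; rewrite (ipZr ip_inner) ler_pdivrMl // => wz.
have := scaled_resolvent_mono A_mm lam0 Ap Ax0; move: wz.
by ip_expand ip_inner; lra.
Qed.

End DomainGeometry.

Section FirmlyNonexpansive.
Context {R : realType} {X : completeNormedModType R}.

Definition firmly_nonexpansive (T : X -> X) := forall x y,
  `|T x - T y| ^+ 2 + `|(x - T x) - (y - T y)| ^+ 2 <= `|x - y| ^+ 2.

Variable T : X -> X.
Hypothesis T_firm : firmly_nonexpansive T.

Lemma firmly_nonexpansive_le x y : `|T x - T y| <= `|x - y|.
Proof.
rewrite -ler_sqr ?nnegrE //; apply: le_trans (T_firm x y).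
by rewrite lerDl sqr_ge0.
Qed.

Lemma iter_step_le x n : `|iter n T x - iter n.+1 T x| <= `|x - T x|.
Proof. by elim: n => // n IHn; exact: le_trans (firmly_nonexpansive_le _ _) IHn. Qed.

Lemma iter_step_sub_cvg0 x y :
  (fun n => (iter n T x - iter n.+1 T x) - (iter n T y - iter n.+1 T y)) @ \oo --> 0.
Proof.
pose g n := (iter n T x - iter n.+1 T x) - (iter n T y - iter n.+1 T y).
pose gn2 n := `|g n| ^+ 2.
have series_le n : series gn2 n + `|iter n T x - iter n T y| ^+ 2 <= `|x - y| ^+ 2.
  elim: n => [|n IHn]; first by rewrite /series /= big_geq // add0r.
  apply: le_trans IHn; rewrite seriesSr -addrA lerD2l addrC.
  exact: T_firm.
apply: sqr_norm_cvg0; apply: (@cvg_series_cvg_0 _ _ gn2).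
apply: nondecreasing_is_cvgn.
  by apply: nondecreasing_series => n _ _; exact: sqr_ge0.
exists (`|x - y| ^+ 2) => _ [n _ <-]; apply: le_trans (series_le n).
by rewrite lerDl sqr_ge0.
Qed.

Lemma iter_step_near_le x y (e : R) : 0 < e ->
  \forall n \near \oo, `|iter n T x - iter n.+1 T x| <= `|y - T y| + e.
Proof.
move=> e0; have /cvgr0Pnorm_lt /(_ e e0) := iter_step_sub_cvg0 x y.
apply: filterS => n gn_small.
rewrite -[X in `|X|](subrK (iter n T y - iter n.+1 T y)) addrC.
apply: le_trans (ler_normD _ _) _; apply: lerD; first exact: iter_step_le.
exact: ltW.
Qed.

Lemma iter_step_norm_cvg x (v : X) : closure (range (fun y => y - T y)) v ->
  (forall y, `|v| <= `|y - T y|) ->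
  (fun n => `|iter n T x - iter n.+1 T x|) @ \oo --> `|v|.
Proof.
move=> /closureP_norm v_cl v_min; apply/cvgrPdist_le => e e0.
have e2 : 0 < e / 2 by rewrite divr_gt0.
have [_ [y _ <-] vy] := v_cl _ e2.
near=> n; rewrite ler0_norm ?subr_le0 ?v_min // opprB lerBlDl.
have : `|y - T y| <= `|v| + e / 2.
  by rewrite -[y - T y](subrKC v); apply: le_trans (ler_normD _ _) _; rewrite lerD2l distrC ltW.
suff : `|iter n T x - iter n.+1 T x| <= `|y - T y| + e / 2 by rewrite [e]splitr; lra.
by near: n; exact: iter_step_near_le.
Unshelve. all: by end_near.
Qed.

End FirmlyNonexpansive.

Section DouglasRachford.
Context {R : realType} {X : completeNormedModType R} {ip : X -> X -> R}.
Hypothesis ip_inner : is_inner_product ip.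
Variables A B : X -> set X.
Hypotheses (A_mm : maximally_monotone ip A) (B_mm : maximally_monotone ip B).

Local Notation T := (DR_T A B).
Local Notation D := (setdiffM (dom A) (dom B)).
Local Notation Rg := (setsumM (ran A) (ran B)).
Local Notation da y := (resolvent A y - resolvent A (T y)).
Local Notation db y := (resolvent (op_inv A) y - resolvent (op_inv A) (T y)).

(* Sum of the monotonicity inequalities of A at [x, y] and of B at [R_A x, R_A y]. *)
Lemma DR_T_firmly_nonexpansive : firmly_nonexpansive T.
Proof.
move=> x y; have := A_mm.1 _ _ _ _ (resolventP ip_inner x A_mm) (resolventP ip_inner y A_mm).
have := B_mm.1 _ _ _ _ (resolventP ip_inner (reflected A x) B_mm)
  (resolventP ip_inner (reflected A y) B_mm).
rewrite /DR_T /reflected.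
move: (resolvent B (2%:R *: resolvent A x - x)) (resolvent B (2%:R *: resolvent A y - y)).
move: (resolvent A x) (resolvent A y) => a a' c c'.
by ip_expand ip_inner; lra.
Qed.

Lemma DR_shadow_ran y : Rg (da y).
Proof.
exists (T y - resolvent A (T y)), (reflected A y - resolvent B (reflected A y)).
split; first by exists (resolvent A (T y)); exact: (resolventP ip_inner _ A_mm).
split; first by exists (resolvent B (reflected A y)); exact: (resolventP ip_inner _ B_mm).
by rewrite /DR_T /reflected; vector_ring ip_inner.
Qed.

Lemma DR_shadow_dom y : D (db y).
Proof.
exists (resolvent A (T y)), (resolvent B (reflected A y)).
split; first by exists (T y - resolvent A (T y)); exact: (resolventP ip_inner _ A_mm).
split; first by exists (reflected A y - resolvent B (reflected A y));
  exact: (resolventP ip_inner _ B_mm).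
by rewrite !(resolvent_inv ip_inner _ A_mm) /T /DR_T; vector_ring ip_inner.
Qed.

Lemma DR_shadow_add y : da y + db y = y - T y.
Proof. by rewrite !(resolvent_inv ip_inner _ A_mm); vector_ring ip_inner. Qed.

Lemma DR_shadow_mono y : 0 <= ip (da y) (db y).
Proof.
rewrite !(resolvent_inv ip_inner _ A_mm).
by apply: A_mm.1; exact: (resolventP ip_inner _ A_mm).
Qed.

Local Notation vD := (proj_set (closure D) 0).
Local Notation vR := (proj_set (closure Rg) 0).
Local Notation v := (proj_set (closure D `&` closure Rg) 0).

Let A_graph := maximally_monotone_graph_n0 ip_inner A_mm.
Let B_graph := maximally_monotone_graph_n0 ip_inner B_mm.

Lemma closure_D_convex : is_convex (closure D).
Proof.
by apply: convex_closure; apply: convex_in_closure_setdiffM;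
  apply: (dom_convex_in_closure ip_inner).
Qed.

Lemma closure_Rg_convex : is_convex (closure Rg).
Proof.
by apply: convex_closure; apply: convex_in_closure_setsumM;
  apply: (dom_convex_in_closure ip_inner); exact: maximally_monotone_inv.
Qed.

Lemma closure_D_n0 : closure D !=set0.
Proof.
have [[a [u Aau]] [b [w Bbw]]] := (A_graph, B_graph).
by exists (a - b); apply: subset_closure; exists a, b; split; [exists u|split; [exists w|]].
Qed.

Lemma closure_Rg_n0 : closure Rg !=set0.
Proof.
have [[a [u Aau]] [b [w Bbw]]] := (A_graph, B_graph).
by exists (u + w); apply: subset_closure; exists u, w; split; [exists a|split; [exists b|]].
Qed.

Let vD_spec : closure D vD /\ forall q, closure D q -> `|vD| <= `|q|.
Proof. exact: (proj_set_spec ip_inner (@closed_closure _ D) closure_D_convex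
  closure_D_n0). Qed.

Let vR_spec : closure Rg vR /\ forall q, closure Rg q -> `|vR| <= `|q|.
Proof. exact: (proj_set_spec ip_inner (@closed_closure _ Rg) closure_Rg_convex
  closure_Rg_n0). Qed.

Let vD_var q : closure D q -> `|vD| ^+ 2 <= ip vD q.
Proof. exact: (proj_set_variational ip_inner (@closed_closure _ D) closure_D_convex
  closure_D_n0). Qed.

Let vR_var q : closure Rg q -> `|vR| ^+ 2 <= ip vR q.
Proof. exact: (proj_set_variational ip_inner (@closed_closure _ Rg) closure_Rg_convex
  closure_Rg_n0). Qed.

Let ran_A_vR_bound : exists K, forall x u, A x u -> ip (- vR) u <= K.
Proof.
have [b [w Bbw]] := B_graph; exists (ip vR w - `|vR| ^+ 2) => x u Axu.
have Rg_uw : Rg (u + w) by exists u, w; split; [exists x|split; [exists b|]].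
have := vR_var (subset_closure Rg_uw).
by rewrite (ipNl ip_inner) (ipDr ip_inner); lra.
Qed.

Let ran_B_vR_bound : exists K, forall x u, B x u -> ip (- vR) u <= K.
Proof.
have [a [u Aau]] := A_graph; exists (ip vR u - `|vR| ^+ 2) => x w Bxw.
have Rg_uw : Rg (u + w) by exists u, w; split; [exists a|split; [exists x|]].
have := vR_var (subset_closure Rg_uw).
by rewrite (ipNl ip_inner) (ipDr ip_inner); lra.
Qed.

Let dom_B_vD_bound : exists K, forall u x, op_inv B u x -> ip vD x <= K.
Proof.
have [a [u Aau]] := A_graph; exists (ip vD a - `|vD| ^+ 2) => w b Bbw.
have D_ab : D (a - b) by exists a, b; split; [exists u|split; [exists w|]].
have := vD_var (subset_closure D_ab).
by rewrite (ipBr ip_inner); lra.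
Qed.

Lemma closure_D_subr_vR z : closure D z -> closure D (z - vR).
Proof.
have [K vRK] := ran_A_vR_bound.
apply: closure_addr => _ [a [b [[u Aau] [Bb ->]]]].
rewrite addrAC; apply: closure_setdiffM; last exact: subset_closure.
exact: (closure_dom_recession ip_inner A_mm vRK Aau).
Qed.

Lemma closure_D_addr_vR z : closure D z -> closure D (z + vR).
Proof.
have [K vRK] := ran_B_vR_bound.
apply: closure_addr => _ [a [b [Aa [[w Bbw] ->]]]].
rewrite -addrA (addrC (- b)) -opprB; apply: closure_setdiffM; first exact: subset_closure.
exact: (closure_dom_recession ip_inner B_mm vRK Bbw).
Qed.

Lemma closure_Rg_addr_vD z : closure Rg z -> closure Rg (z + vD).
Proof.
have [K vDK] := dom_B_vD_bound.
apply: closure_addr => _ [u [w [Au [[b Bbw] ->]]]].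
rewrite -addrA; apply: closure_setsumM; first exact: subset_closure.
exact: (closure_dom_recession ip_inner (maximally_monotone_inv ip_inner B_mm) vDK Bbw).
Qed.

Lemma ip_vD_vR_le0 : ip vD vR <= 0.
Proof.
have := vD_var (closure_D_subr_vR vD_spec.1).
by rewrite (ipBr ip_inner) (ipxx ip_inner); lra.
Qed.

Lemma vD_addr_vR_in : closure D (vD + vR) /\ closure Rg (vD + vR).
Proof.
split; first exact: closure_D_addr_vR vD_spec.1.
by rewrite addrC; exact: closure_Rg_addr_vD vR_spec.1.
Qed.

Let v_spec : (closure D `&` closure Rg) v /\
  forall q, (closure D `&` closure Rg) q -> `|v| <= `|q|.
Proof.
apply: (proj_set_spec ip_inner); last by exists (vD + vR); exact: vD_addr_vR_in.
  exact: closedI (@closed_closure _ D) (@closed_closure _ Rg).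
move=> p q t [Dp Rp] [Dq Rq] t01.
by split; [exact: closure_D_convex | exact: closure_Rg_convex].
Qed.

Lemma norm_v_le : `|v| ^+ 2 <= `|vD| ^+ 2 + `|vR| ^+ 2.
Proof.
have := v_spec.2 _ vD_addr_vR_in; rewrite -ler_sqr ?nnegrE // (normD_sqr ip_inner).
by have := ip_vD_vR_le0; lra.
Qed.

Lemma DR_shadow_sqr_ge y : `|vD| ^+ 2 + `|vR| ^+ 2 <= `|da y| ^+ 2 + `|db y| ^+ 2.
Proof.
have vR_le : `|vR| ^+ 2 <= `|da y| ^+ 2.
  by rewrite ler_sqr ?nnegrE //; exact: vR_spec.2 _ (subset_closure (DR_shadow_ran y)).
have vD_le : `|vD| ^+ 2 <= `|db y| ^+ 2.
  by rewrite ler_sqr ?nnegrE //; exact: vD_spec.2 _ (subset_closure (DR_shadow_dom y)).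
lra.
Qed.

Lemma DR_shadow_sqr_le y : `|da y| ^+ 2 + `|db y| ^+ 2 <= `|y - T y| ^+ 2.
Proof.
rewrite -DR_shadow_add [leRHS](normD_sqr ip_inner).
by have := DR_shadow_mono y; lra.
Qed.

Lemma DR_shadow_dist_le y :
  `|vR - da y| ^+ 2 + `|vD - db y| ^+ 2 <= `|y - T y| ^+ 2 - `|v| ^+ 2.
Proof.
have := vR_var (subset_closure (DR_shadow_ran y)).
have := vD_var (subset_closure (DR_shadow_dom y)).
have := DR_shadow_mono y; have := norm_v_le.
by rewrite -DR_shadow_add; ip_expand ip_inner; lra.
Qed.

Hypothesis range_closure :
  closure (range (fun y => y - T y)) = closure D `&` closure Rg.
Variable x : X.

Lemma DR_step_sqr_cvg :
  (fun n => `|iter n T x - iter n.+1 T x| ^+ 2) @ \oo --> `|v| ^+ 2.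
Proof.
have step_cvg : (fun n => `|iter n T x - iter n.+1 T x|) @ \oo --> `|v|.
  apply: (iter_step_norm_cvg DR_T_firmly_nonexpansive).
    by rewrite range_closure; exact: v_spec.1.
  by move=> y; apply: v_spec.2; rewrite -range_closure; apply: subset_closure; exists y.
exact: (cvgM step_cvg step_cvg).
Qed.

Lemma DR_shadow_sqr_cvg :
  (fun n => `|da (iter n T x)| ^+ 2 + `|db (iter n T x)| ^+ 2) @ \oo --> `|v| ^+ 2.
Proof.
apply: (squeeze_cvgr _ (cvg_cst (`|v| ^+ 2)) DR_step_sqr_cvg).
apply: nearW => n; rewrite DR_shadow_sqr_le andbT.
exact: le_trans norm_v_le (DR_shadow_sqr_ge _).
Qed.

Lemma norm_v_sqr : `|v| ^+ 2 = `|vD| ^+ 2 + `|vR| ^+ 2.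
Proof.
apply/le_anti; rewrite norm_v_le /=.
apply: (closed_cvg _ (@closed_ge _ _) _ _ DR_step_sqr_cvg); apply: nearW => n /=.
exact: le_trans (DR_shadow_sqr_ge _) (DR_shadow_sqr_le _).
Qed.

Let step_gap_cvg0 :
  (fun n => `|iter n T x - iter n.+1 T x| ^+ 2 - `|v| ^+ 2) @ \oo --> 0.
Proof.
have := cvgB DR_step_sqr_cvg (cvg_cst (`|v| ^+ 2)); rewrite subrr.
exact.
Qed.

Lemma DR_shadow_cvg : (fun n => da (iter n T x)) @ \oo --> vR.
Proof.
apply: cvg_sqr_dist0; apply: (squeeze_cvgr _ (cvg_cst 0) step_gap_cvg0).
apply: nearW => n; rewrite sqr_ge0 /=.
by have := DR_shadow_dist_le (iter n T x); have := sqr_ge0 `|vD - db (iter n T x)|; lra.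
Qed.

Lemma DR_dual_shadow_cvg : (fun n => db (iter n T x)) @ \oo --> vD.
Proof.
apply: cvg_sqr_dist0; apply: (squeeze_cvgr _ (cvg_cst 0) step_gap_cvg0).
apply: nearW => n; rewrite sqr_ge0 /=.
by have := DR_shadow_dist_le (iter n T x); have := sqr_ge0 `|vR - da (iter n T x)|; lra.
Qed.

End DouglasRachford.

Unset Implicit Arguments.
Set Strict Implicit.

Theorem proposition5p1 (R : realType) (X : completeNormedModType R)
  (ip : X -> X -> R) (A B : X -> set X) (x : X) :
  is_inner_product ip ->
  maximally_monotone ip A -> maximally_monotone ip B ->
  let T := DR_T A B in
  let v := proj_set (closure (range (fun y => y - T y))) (0 : X) in
  let D := setdiffM (dom A) (dom B) in
  let Rg := setsumM (ran A) (ran B) in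
  let vD := proj_set (closure D) (0 : X) in
  let vR := proj_set (closure Rg) (0 : X) in
  closure (range (fun y => y - T y)) = closure (D `&` Rg) ->
  closure (D `&` Rg) = closure D `&` closure Rg ->
  [/\ (fun n => `|resolvent A (iter n T x) - resolvent A (iter n.+1 T x)| ^+ 2
              + `|resolvent (op_inv A) (iter n T x)
                  - resolvent (op_inv A) (iter n.+1 T x)| ^+ 2) @ \oo --> `|v| ^+ 2,
      `|v| ^+ 2 = `|vD| ^+ 2 + `|vR| ^+ 2,
      (fun n => resolvent A (iter n T x) - resolvent A (iter n.+1 T x)) @ \oo --> vR &
      (fun n => resolvent (op_inv A) (iter n T x)
                - resolvent (op_inv A) (iter n.+1 T x)) @ \oo --> vD].
Proof.
move=> ip_inner A_mm B_mm T v D Rg vD vR range_DR DR_closure.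
have range_closure : closure (range (fun y => y - T y)) = closure D `&` closure Rg.
  by rewrite range_DR DR_closure.
rewrite /v range_closure; split.
- exact: (DR_shadow_sqr_cvg ip_inner A_mm B_mm range_closure).
- exact: (norm_v_sqr ip_inner A_mm B_mm range_closure x).
- exact: (DR_shadow_cvg ip_inner A_mm B_mm range_closure).
- exact: (DR_dual_shadow_cvg ip_inner A_mm B_mm range_closure).
Qed.
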